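(* There exists a haltingly correct CRN protocol $\Pi=(\mathcal{S},\mathcal{R})$ such that $\operatorname{RT}_{\mathrm{halt}}^{\Pi}(n)=O(n)$, but if the minimum in the definition of $\operatorname{RT}_{\mathrm{halt}}^{\Pi}(n)$ is restricted to runtime policies $\varrho$ with $\varrho(\mathbf{c})\supseteq\mathcal{E}(\mathbf{c})$ for every configuration $\mathbf{c}$, then the resulting quantity is $\Omega(n\log n)$.
   Context: $\mathcal{E}(\mathbf{c})$ denotes the set of reactions that escape from the strongly connected component of $\mathbf{c}$ in the configuration digraph $D^{\Pi}$ (which has an $\alpha$-labeled edge $\mathbf{c}\to\alpha(\mathbf{c})$ for each configuration $\mathbf{c}$ and each $\alpha\in\operatorname{app}(\mathbf{c})$); a reaction $\alpha$ escapes from a component $S$ if $\alpha\in\operatorname{app}(\mathbf{c})$ and $\alpha(\mathbf{c})\notin S$ for all $\mathbf{c}\in S$. CRN model: $\Pi=(\mathcal{S},\mathcal{R})$, finite species set, finite reaction set $\mathcal{R}\subset\mathbb{N}^{\mathcal{S}}\times\mathbb{N}^{\mathcal{S}}$; reactions $(\mathbf{r},\mathbf{p})$ with $\|\mathbf{r}\|_1\in\{1,2\}$, $\|\mathbf{r}\|_1\le\|\mathbf{p}\|_1$; every $\mathbf{r}$ with $1\le\|\mathbf{r}\|_1\le2$ has a nonempty set $\mathcal{R}(\mathbf{r})$ of reactions; void reactions ($\mathbf{r}=\mathbf{p}$) alone in their $\mathcal{R}(\mathbf{r})$; $\operatorname{NV}(\mathcal{R})$ non-void; finite density. Configurations $\mathbf{c}\in\mathbb{N}^{\mathcal{S}}$,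 $\|\mathbf{c}\|_1\ge1$; applicability $\mathbf{r}\le\mathbf{c}$, result $\alpha(\mathbf{c})=\mathbf{c}-\mathbf{r}+\mathbf{p}$; $\operatorname{app}(\mathbf{c})$; reachability $\stackrel{*}{\rightharpoonup}$; $\mathrm{halt}(Z)=\{\mathbf{c}\in Z:\mathbf{c}\stackrel{*}{\rightharpoonup}\mathbf{c}'\Rightarrow\mathbf{c}'=\mathbf{c}\}$. Weakly fair executions $\langle\mathbf{c}^t,\alpha^t\rangle$: every reaction applicable at step $t$ is later scheduled or becomes inapplicable. Correctness is w.r.t. an interface $\mathcal{I}=(\mathcal{U},\mu,\mathcal{C})$ giving target sets $Z_{\mathcal{I}}(\mathbf{c}^0)=\{\mathbf{c}:(\mu(\mathbf{c}^0),\mu(\mathbf{c}))\in\mathcal{C}\}$ and valid initial configurations (those with $Z_{\mathcal{I}}(\mathbf{c}^0)\ne\emptyset$); haltingly correct: every weakly fair valid execution reaches $\mathrm{halt}(Z_{\mathcal{I}}(\mathbf{c}^0))$, first such step = halting step. Runtime: stochastic scheduler with volume $\varphi=\Theta(n)$, $n=\|\mathbf{c}^0\|_1$; propensity $\pi_{\mathbf{c}}(\alpha)=\mathbf{c}(A)/|\mathcal{R}(\mathbf{r})|$ ($\mathbf{r}=A$), $\frac1\varphi\binom{\mathbf{c}(A)}2/|\mathcal{R}(\mathbf{r})|$ ($\mathbf{r}=2A$), $\frac1\varphi\mathbf{c}(A)\mathbf{c}(B)/|\mathcal{R}(\mathbf{r})|$ ($\mathbf{r}=A+B$); step time span $1/\pi_{\mathbf{c}}(\mathcal{R})$.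 $\tau(\eta,t,Q)$ = least $s>t$ with $\alpha^{s-1}\in Q$ or every reaction of $Q$ inapplicable at some step in $[t,s]$. Runtime policy $\varrho(\mathbf{c})\subseteq\operatorname{NV}(\mathcal{R})$; skipping policy $\sigma(t)\ge t$; rounds $t(0)=0$, $t_e(i)=\sigma(t(i))$, $\mathbf{e}^i=\mathbf{c}^{t_e(i)}$, $t(i+1)=\tau(\eta,t_e(i),\varrho(\mathbf{e}^i))$; $\operatorname{TC}^{\varrho}(\mathbf{c})$ = expected total time span of the steps before $\tau(\eta_r,0,\varrho(\mathbf{c}))$ of a stochastic execution from $\mathbf{c}$; $\operatorname{RT}_{\mathrm{halt}}^{\varrho,\sigma}(\eta)=\sum_{i<i^*}\operatorname{TC}^{\varrho}(\mathbf{e}^i)$, $i^*=\min\{i:t(i)\ge t^*\}$; $\operatorname{RT}_{\mathrm{halt}}^{\Pi}(n)=\min_\varrho\max_{\eta,\sigma}\operatorname{RT}_{\mathrm{halt}}^{\varrho,\sigma}(\eta)$, max over weakly fair valid executions with initial molecular count $n$ and all skipping policies. *)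

From HB Require Import structures.
From mathcomp Require Import all_boot all_order all_algebra.
From mathcomp Require Import all_classical all_reals all_analysis.

Set Implicit Arguments.
Unset Strict Implicit.
Unset Printing Implicit Defensive.

Import Order.TTheory GRing.Theory Num.Theory.
Local Open Scope classical_set_scope.
Local Open Scope ring_scope.

Section CRN.
Context {S : finType}.

Definition vec := {ffun S -> nat}.
Definition norm1 (c : vec) : nat := (\sum_(A : S) c A)%N.
Definition is_config (c : vec) : Prop := (1 <= norm1 c)%N.

Definition reaction := (vec * vec)%type.
Definition void_rx : reaction := ([ffun=> 0%N], [ffun=> 0%N]).

Definition applicable (a : reaction) (c : vec) : bool := [forall A, (a.1 A <= c A)%N].
Definition react (a : reaction) (c : vec) : vec := [ffun A => (c A - a.1 A + a.2 A)%N].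

Definition Rof (Rs : seq reaction) (r : vec) : seq reaction := [seq a <- Rs | a.1 == r].
Definition NV (Rs : seq reaction) : seq reaction := [seq a <- Rs | a.1 != a.2].

Definition step (Rs : seq reaction) (c c' : vec) : Prop :=
  exists a, a \in Rs /\ applicable a c /\ c' = react a c.
Inductive reach (Rs : seq reaction) : vec -> vec -> Prop :=
| reach_refl c : reach Rs c c
| reach_step c c' c'' : step Rs c c' -> reach Rs c' c'' -> reach Rs c c''.

Definition finite_density (Rs : seq reaction) : Prop :=
  exists k : nat, forall c0 c, is_config c0 -> reach Rs c0 c ->
    (norm1 c <= k * norm1 c0)%N.

Definition wf_crn (Rs : seq reaction) : Prop :=
  [/\ uniq Rs,
      (forall a, a \in Rs ->
         [/\ (1 <= norm1 a.1)%N, (norm1 a.1 <= 2)%N & (norm1 a.1 <= norm1 a.2)%N]),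
      (forall r : vec, (1 <= norm1 r)%N -> (norm1 r <= 2)%N -> Rof Rs r != [::]),
      (forall r : vec, (r, r) \in Rs -> Rof Rs r = [:: (r, r)])
    & finite_density Rs].

Record interface := Interface {
  iU : Type;
  imu : vec -> iU;
  iC : iU -> iU -> Prop }.

Definition target (I : interface) (c0 : vec) : set vec :=
  [set c | is_config c /\ @iC I (@imu I c0) (@imu I c)].
Definition valid (I : interface) (c0 : vec) : Prop :=
  is_config c0 /\ target I c0 !=set0.
Definition halt (Rs : seq reaction) (Z : set vec) : set vec :=
  [set c | Z c /\ forall c', reach Rs c c' -> c' = c].

Definition execution (Rs : seq reaction) (cs : nat -> vec) (al : nat -> reaction) : Prop :=
  forall t, [/\ al t \in Rs, applicable (al t) (cs t) & cs t.+1 = react (al t) (cs t)].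
Definition weakly_fair (Rs : seq reaction) (cs : nat -> vec) (al : nat -> reaction) : Prop :=
  forall t a, a \in Rs -> applicable a (cs t) ->
    exists s, (t <= s)%N /\ (al s = a \/ ~~ applicable a (cs s)).

Definition haltingly_correct (Rs : seq reaction) (I : interface) : Prop :=
  forall cs al, execution Rs cs al -> weakly_fair Rs cs al -> valid I (cs 0%N) ->
    exists t, halt Rs (target I (cs 0%N)) (cs t).

Definition stop_cond (cs : nat -> vec) (al : nat -> reaction) (t : nat)
    (Q : set reaction) (s : nat) : Prop :=
  Q (al s.-1) \/ (forall b, Q b -> exists u, (t <= u <= s)%N /\ ~~ applicable b (cs u)).
Definition is_tau (cs : nat -> vec) (al : nat -> reaction) (t : nat)
    (Q : set reaction) (s : nat) : Prop :=
  [/\ (t < s)%N, stop_cond cs al t Q s &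
      forall s', (t < s' < s)%N -> ~ stop_cond cs al t Q s'].
(* step k comes before tau(eta, t, Q), i.e. k < tau(eta, t, Q) *)
Definition before_tau (cs : nat -> vec) (al : nat -> reaction) (t : nat)
    (Q : set reaction) (k : nat) : Prop :=
  forall s, (t < s <= k)%N -> ~ stop_cond cs al t Q s.

Definition is_least (P : nat -> Prop) (n : nat) : Prop :=
  P n /\ forall m, (m < n)%N -> ~ P m.

Definition scc (Rs : seq reaction) (c : vec) : set vec :=
  [set c' | reach Rs c c' /\ reach Rs c' c].
Definition escapes (a : reaction) (X : set vec) : Prop :=
  forall c, X c -> applicable a c /\ ~ X (react a c).
Definition escaping (Rs : seq reaction) (c : vec) : set reaction :=
  [set a | a \in Rs /\ escapes a (scc Rs c)].

Definition runtime_policy (Rs : seq reaction) (rho : vec -> set reaction) : Prop :=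
  forall c a, rho c a -> a \in NV Rs.
Definition skipping_policy (sigma : nat -> nat) : Prop := forall t, (t <= sigma t)%N.

Fixpoint words (Rs : seq reaction) (t : nat) : seq (seq reaction) :=
  if t is t'.+1 then [seq a :: w | a <- Rs, w <- words Rs t'] else [:: [::]].
Definition path_conf (c : vec) (w : seq reaction) (k : nat) : vec :=
  foldl (fun c' a => react a c') c (take k w).
Definition path_rx (w : seq reaction) (k : nat) : reaction := nth void_rx w k.

Section Stochastic.
Context {R : realType}.

(* propensity pi_c(alpha) with volume phi:
   c(A)/|R(r)| for r = A, (1/phi) C(c(A),2)/|R(r)| for r = 2A,
   (1/phi) c(A)c(B)/|R(r)| for r = A + B; uniformly
   prod_A C(c(A), r(A)) / phi^(||r||_1 - 1) / |R(r)|. *)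
Definition propensity (Rs : seq reaction) (phi : R) (c : vec) (a : reaction) : R :=
  ((\prod_(A : S) 'C(c A, a.1 A))%N%:R / phi ^+ (norm1 a.1).-1)
    / (size (Rof Rs a.1))%:R.
Definition tot_propensity (Rs : seq reaction) (phi : R) (c : vec) : R :=
  \sum_(a <- Rs) propensity Rs phi c a.

Definition word_prob (Rs : seq reaction) (phi : R) (c : vec) (w : seq reaction) : R :=
  \prod_(k < size w)
     (propensity Rs phi (path_conf c w k) (path_rx w k)
       / tot_propensity Rs phi (path_conf c w k)).

(* TC^rho(c) with Q = rho(c): expected total time span of the steps before
   tau(eta_r, 0, Q) of a stochastic execution eta_r from c, where the time
   span of step t is 1/pi_{c^t}(R).  Written as
   sum_t E[ 1{t < tau} / pi_{c^t}(R) ] (a sum of nonnegative terms). *)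
Definition TC (Rs : seq reaction) (phi : R) (Q : set reaction) (c : vec) : \bar R :=
  ereal_sup (range (fun N : nat =>
    (\sum_(t < N) \sum_(w <- words Rs t)
        word_prob Rs phi c w *
        (if `[< before_tau (path_conf c w) (path_rx w) 0%N Q t >]
         then (tot_propensity Rs phi (path_conf c w t))^-1 else 0))%:E)).

(* values of RT_halt^{rho,sigma}(eta) (there is exactly one for weakly fair
   executions of a haltingly correct protocol) *)
Definition RT_vals (Rs : seq reaction) (I : interface) (phi : R)
    (rho : vec -> set reaction) (sigma : nat -> nat)
    (cs : nat -> vec) (al : nat -> reaction) : set (\bar R) :=
  [set v | exists (tr : nat -> nat) (tstar istar : nat),
     [/\ tr 0%N = 0%N,
         (forall i, is_tau cs al (sigma (tr i)) (rho (cs (sigma (tr i)))) (tr i.+1)),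
         is_least (fun t => halt Rs (target I (cs 0%N)) (cs t)) tstar,
         is_least (fun i => (tstar <= tr i)%N) istar &
         v = (\sum_(i < istar) TC Rs phi (rho (cs (sigma (tr i)))) (cs (sigma (tr i))))%E]].

Definition RT_max (Rs : seq reaction) (I : interface) (phi : R)
    (rho : vec -> set reaction) (n : nat) : \bar R :=
  ereal_sup [set v | exists cs al sigma,
     [/\ execution Rs cs al /\ weakly_fair Rs cs al, valid I (cs 0%N),
         norm1 (cs 0%N) = n, skipping_policy sigma & RT_vals Rs I phi rho sigma cs al v]].

Definition RT_halt_adm (Rs : seq reaction) (I : interface) (phi : nat -> R)
    (adm : (vec -> set reaction) -> Prop) (n : nat) : \bar R :=
  ereal_inf [set RT_max Rs I (phi n) rho n |
             rho in [set rho | runtime_policy Rs rho /\ adm rho]].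

Definition RT_halt (Rs : seq reaction) (I : interface) (phi : nat -> R) (n : nat) : \bar R :=
  RT_halt_adm Rs I phi (fun _ => True) n.

Definition RT_halt_escaping (Rs : seq reaction) (I : interface) (phi : nat -> R)
    (n : nat) : \bar R :=
  RT_halt_adm Rs I phi
    (fun rho => forall c, is_config c -> escaping Rs c `<=` rho c) n.

End Stochastic.
End CRN.

Arguments vec : clear implicits.
Arguments reaction : clear implicits.
Arguments interface : clear implicits.

Section Asymptotics.
Context {R : realType}.
Definition volume_Theta_n (phi : nat -> R) : Prop :=
  exists a b : R, [/\ 0 < a, 0 < b &
    forall n : nat, (0 < n)%N -> a * n%:R <= phi n /\ phi n <= b * n%:R].
Definition is_O_n (f : nat -> \bar R) : Prop :=
  exists (C : R) (N : nat), forall n, (N <= n)%N -> (f n <= (C * n%:R)%:E)%E.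
Definition is_Omega_nlogn (f : nat -> \bar R) : Prop :=
  exists (c : R) (N : nat), 0 < c /\
    forall n, (N <= n)%N -> ((c * n%:R * ln (n%:R))%:E <= f n)%E.
End Asymptotics.

From HB Require Import structures.
From mathcomp Require Import all_boot all_order all_algebra.
From mathcomp Require Import all_classical all_reals all_analysis.
From mathcomp Require Import ring lra zify.

(** The protocol has species L, A, B, Z, the reactions L + A -> L + B and
    L + Z -> 2B, and a void reaction for every other reactant vector.  From
    one L, one Z and n - 2 copies of A it halts exactly when L + Z -> 2B
    fires, because that removes the only L.

    Upper bound: the policy that always waits for L + Z -> 2B has a single
    round, whose expected length is at most phi because the propensity of
    that reaction is at least 1/phi while it is applicable.

    Lower bound: every non-void reaction strictly decreases #A + #Z, so it
    leaves its strongly connected component and belongs to any policy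
    containing the escaping reactions; hence every non-void step ends a round.
    The adversary fires L + A -> L + B n - 2 times before L + Z -> 2B.  Void
    steps neither move the configuration nor end the round, so the round
    starting at step i lasts in expectation the waiting time 1/P for a
    non-void reaction, where P = (n - 1 - i)/phi (we keep half of it, from a
    truncated geometric series).  Summing gives
    (phi/2) H_(n-1) >= (phi/2) ln n = Omega(n log n). *)

Set Implicit Arguments.
Unset Strict Implicit.
Unset Printing Implicit Defensive.

Import Order.TTheory GRing.Theory Num.Theory.
Local Open Scope classical_set_scope.
Local Open Scope ring_scope.

(** * Geometric and harmonic sums *)

Lemma geometric_partial_sum_ge_half (R : realType) (V P : R) : 0 <= V -> 0 < P ->
  exists N, (2 * P)^-1 <= \sum_(t < N) (V / (V + P)) ^+ t / (V + P).
Proof.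
move=> V_ge0 P_gt0; have VP_gt0 : 0 < V + P by lra.
set v := V / (V + P).
have v_ge0 : 0 <= v by rewrite divr_ge0 // ltW.
have v_lt1 : v < 1 by rewrite ltr_pdivrMr // mul1r; lra.
have absv_lt1 : `|v| < 1 by rewrite ger0_norm.
have : \forall n \near \oo, `|v ^+ n| <= 2^-1.
  by apply: cvgr0_norm_le; [exact: cvg_expr | rewrite invr_gt0].
case=> N _ vN_small.
have vN_le : v ^+ N <= 2^-1.
  by have := vN_small N (leqnn N); rewrite /= ger0_norm ?exprn_ge0.
have geometric_sum : (1 - v) * \sum_(t < N) v ^+ t = 1 - v ^+ N.
  rewrite -[1 in RHS](expr1n _ N) subrXX; congr (_ * _).
  by apply: eq_bigr => i _; rewrite expr1n mul1r.
exists N; rewrite -mulr_suml.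
have -> : (\sum_(t < N) v ^+ t) / (V + P) = (1 - v ^+ N) / P.
  by rewrite -geometric_sum /v; field; rewrite !lt0r_neq0.
rewrite invfM ler_pM2r ?invr_gt0 //; lra.
Qed.

Lemma ln_le_harmonic (R : realType) m : ln (m.+1%:R : R) <= \sum_(i < m) (i.+1%:R)^-1.
Proof.
elim: m => [|m IH]; first by rewrite big_ord0 ln1.
have m1_gt0 : (0 : R) < m.+1%:R by rewrite ltr0n.
have -> : (m.+2%:R : R) = m.+1%:R * (1 + m.+1%:R^-1).
  by rewrite mulrDr mulr1 mulfV ?gt_eqF // natr1.
rewrite big_ord_recr lnM ?posrE ?addr_gt0 ?invr_gt0 // lerD // le_ln1Dx //.
by apply: lt_le_trans (ltrN10 _) _; rewrite invr_ge0 ler0n.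
Qed.

Lemma norm1_react (S : finType) (a : reaction S) (c : vec S) : applicable a c ->
  norm1 (react a c) = (norm1 c - norm1 a.1 + norm1 a.2)%N.
Proof.
move/forallP => ac; rewrite /norm1 -sumnB => [|A _]; last exact: ac.
by rewrite -big_split; apply: eq_bigr => A _; rewrite ffunE.
Qed.

Lemma react_void (S : finType) (a : reaction S) (c : vec S) :
  applicable a c -> a.1 = a.2 -> react a c = c.
Proof. by move=> /forallP ac a_void; apply/ffunP => A; rewrite ffunE -a_void subnK. Qed.

(** * Rounds of the stochastic scheduler *)

Section StochasticScheduler.
Variables (S : finType) (R : realType) (Rs : seq (reaction S)) (phi : R).
Implicit Types (c : vec S) (a x : reaction S) (w : seq (reaction S)).

Local Notation prop := (propensity Rs phi).
Local Notation tot := (tot_propensity Rs phi).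
Local Notation wprob := (word_prob Rs phi).

Lemma size_words t w : w \in words Rs t -> size w = t.
Proof.
elim: t w => [|t IH] w /=; first by rewrite inE => /eqP ->.
by case/allpairsPdep => a [w' [_ /IH <- ->]].
Qed.

Lemma big_words_cons t (F : seq (reaction S) -> R) :
  \sum_(w <- words Rs t.+1) F w = \sum_(a <- Rs) \sum_(w <- words Rs t) F (a :: w).
Proof. exact: big_allpairs_dep. Qed.

Lemma big_words_rcons t (F : seq (reaction S) -> R) :
  \sum_(w <- words Rs t.+1) F w = \sum_(w <- words Rs t) \sum_(a <- Rs) F (rcons w a).
Proof.
elim: t F => [|t IH] F.
  by rewrite big_words_cons big_seq1; apply: eq_bigr => a _; rewrite big_seq1.
by rewrite big_words_cons (big_words_cons t); apply: eq_bigr => a _; rewrite IH.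
Qed.

Lemma path_conf0 c w : path_conf c w 0 = c.
Proof. by rewrite /path_conf take0. Qed.

Lemma path_conf_rcons c w a k :
  (k <= size w)%N -> path_conf c (rcons w a) k = path_conf c w k.
Proof. by move=> kw; rewrite /path_conf -cats1 takel_cat. Qed.

Lemma path_rx_rcons w a k : (k < size w)%N -> path_rx (rcons w a) k = path_rx w k.
Proof. by move=> kw; rewrite /path_rx nth_rcons kw. Qed.

Lemma path_rx_rcons_size w a : path_rx (rcons w a) (size w) = a.
Proof. by rewrite /path_rx nth_rcons ltnn eqxx. Qed.

Lemma word_prob_nil c : wprob c [::] = 1.
Proof. exact: big_ord0. Qed.

Lemma word_prob_cons c a w : wprob c (a :: w) = prop c a / tot c * wprob (react a c) w.
Proof. by rewrite /word_prob big_ord_recl /path_rx /= path_conf0. Qed.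

Lemma word_prob_rcons c w a : wprob c (rcons w a) =
  wprob c w * (prop (path_conf c w (size w)) a / tot (path_conf c w (size w))).
Proof.
rewrite /word_prob size_rcons big_ord_recr /= path_rx_rcons_size path_conf_rcons //.
by congr (_ * _); apply: eq_bigr => i _; rewrite path_conf_rcons ?path_rx_rcons // ltnW.
Qed.

Lemma propensity_inapplicable c a : ~~ applicable a c -> prop c a = 0.
Proof.
case/forallPn => A; rewrite -ltnNge => cA_lt.
by rewrite /propensity (bigD1 A) //= bin_small // mul0n !mul0r.
Qed.

Hypothesis phi_gt0 : 0 < phi.

Lemma propensity_ge0 c a : 0 <= prop c a.
Proof. by rewrite !divr_ge0 // exprn_ge0 // ltW. Qed.

Lemma tot_propensity_ge0 c : 0 <= tot c.
Proof. by rewrite sumr_ge0 // => a _; exact: propensity_ge0. Qed.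

Lemma word_prob_ge0 c w : 0 <= wprob c w.
Proof.
by rewrite prodr_ge0 // => i _; rewrite divr_ge0 ?propensity_ge0 ?tot_propensity_ge0.
Qed.

Lemma sum_propensity_ratio_le1 c : \sum_(a <- Rs) prop c a / tot c <= 1.
Proof.
rewrite -mulr_suml; have [->|tot_neq0] := eqVneq (tot c) 0.
  by rewrite invr0 mulr0 ler01.
by rewrite mulfV.
Qed.

Lemma TC_inapplicable_le Q c : (forall b, Q b -> ~~ applicable b c) ->
  (TC Rs phi Q c <= ((tot c)^-1)%:E)%E.
Proof.
move=> Q_inapp; apply: ge_ereal_sup => _ [[|N] _ <-]; rewrite lee_fin.
  by rewrite big_ord0 invr_ge0 tot_propensity_ge0.
rewrite big_ord_recl [X in _ + X]big1 ?addr0 => [|t _]; last first.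
  rewrite big1 // => w _; case: asboolP => [running|]; last by rewrite mulr0.
  exfalso; apply: (running 1%N) => //; right => b Qb.
  by exists 0%N; rewrite path_conf0 Q_inapp.
rewrite big_seq1 word_prob_nil mul1r path_conf0.
by case: asboolP; rewrite ?lexx ?invr_ge0 ?tot_propensity_ge0.
Qed.

Section SingleReactionRound.
Variables (x : reaction S) (pi : R).
Hypotheses (x_in : x \in Rs) (Rs_uniq : uniq Rs) (pi_gt0 : 0 < pi)
  (propensity_x_ge : forall c, applicable x c -> pi <= prop c x).

Definition pending c w t :=
  all (fun u => path_rx w u != x) (iota 0 t) &&
  all (fun u => applicable x (path_conf c w u)) (iota 0 t.+1).

Definition pending_prob c t := \sum_(w <- words Rs t) wprob c w * (pending c w t)%:R.

Lemma before_tau_pending c w t : applicable x c ->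
  before_tau (path_conf c w) (path_rx w) 0 [set x] t -> pending c w t.
Proof.
move=> xc running; apply/andP; split; apply/allP => u.
all: rewrite mem_iota add0n => /andP[_ ut].
  by apply/eqP => ux; apply: (running u.+1); [rewrite ut | left].
case: t running ut => [|t] running ut.
  by move: ut; rewrite ltnS leqn0 => /eqP ->; rewrite path_conf0.
apply/negPn/negP => x_inapp; apply: (running t.+1); first by rewrite leqnn.
by right => b /= ->; exists u; rewrite -ltnS ut.
Qed.

Lemma pending_rcons c w a t : size w = t ->
  pending c (rcons w a) t.+1 -> pending c w t && (a != x).
Proof.
move=> sw /andP[/allP not_fired /allP x_app].
have iota0 u k : (u < k)%N -> u \in iota 0 k by rewrite mem_iota.
rewrite andbC; apply/andP; split; last apply/andP; last split.
- by rewrite -(path_rx_rcons_size w a) not_fired // iota0 // sw.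
- apply/allP => u; rewrite mem_iota add0n => /andP[_ ut].
  by rewrite -(path_rx_rcons a) ?sw // not_fired // iota0 // ltnS ltnW.
- apply/allP => u; rewrite mem_iota add0n => /andP[_ ut].
  by rewrite -(path_conf_rcons c a) ?sw // x_app // iota0 // ltnS ltnW.
Qed.

Lemma pending_applicable c w t : pending c w t -> applicable x (path_conf c w t).
Proof. by case/andP => _ /allP; apply; rewrite mem_iota ltnSn. Qed.

Lemma sum_other_propensity_ratio c :
  \sum_(a <- Rs | a != x) prop c a / tot c <= 1 - prop c x / tot c.
Proof.
by have := sum_propensity_ratio_le1 c; rewrite (bigD1_seq x) //= lerBrDl addrC.
Qed.

Lemma pending_prob_succ_le c t : pending_prob c t.+1 <=
  \sum_(w <- words Rs t) wprob c w * (pending c w t)%:R *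
     (1 - prop (path_conf c w t) x / tot (path_conf c w t)).
Proof.
rewrite /pending_prob big_words_rcons big_seq [leRHS]big_seq.
apply: ler_sum => w /size_words sw; set c' := path_conf c w t.
have K_ge0 : 0 <= wprob c w * (pending c w t)%:R by rewrite mulr_ge0 ?word_prob_ge0.
apply: le_trans (ler_wpM2l K_ge0 (sum_other_propensity_ratio c')).
rewrite mulr_sumr [leRHS]big_mkcond /=; apply: ler_sum => a _.
rewrite word_prob_rcons sw -/c'.
case: (boolP (pending c (rcons w a) t.+1)) => [/(pending_rcons sw)/andP[-> ->]|_].
  by rewrite !mulr1n !mulr1.
rewrite mulr0n mulr0; case: ifP => // _.
by rewrite mulr_ge0 // divr_ge0 ?propensity_ge0 ?tot_propensity_ge0.
Qed.

(* A pending step has time span 1/T, T the total propensity, and schedules x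
   with probability at least pi/T, so the pending mass drops by at least pi
   times the time spent. *)
Lemma pending_prob_step c t :
  \sum_(w <- words Rs t) wprob c w * ((pending c w t)%:R / tot (path_conf c w t))
  <= (pending_prob c t - pending_prob c t.+1) / pi.
Proof.
rewrite ler_pdivlMr //; apply: le_trans (lerB (lexx _) (pending_prob_succ_le c t)).
rewrite /pending_prob -sumrB mulr_suml; apply: ler_sum => w _.
have wp_ge0 := word_prob_ge0 c w; set c' := path_conf c w t.
have := tot_propensity_ge0 c'; rewrite -invr_ge0.
case: (boolP (pending c w t)) => [pend|_]; last by rewrite !mulr0n !(mul0r, mulr0) subrr.
have := propensity_x_ge (pending_applicable pend); rewrite /= !mulr1n.
move: (prop c' x) (tot c')^-1 => px iT pi_le iT_ge0.
have := mulr_ge0 wp_ge0 iT_ge0; nra.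
Qed.

Lemma pending_prob0_le1 c : pending_prob c 0 <= 1.
Proof. by rewrite /pending_prob big_seq1 word_prob_nil mul1r lern1 leq_b1. Qed.

Lemma pending_prob_ge0 c t : 0 <= pending_prob c t.
Proof. by rewrite sumr_ge0 // => w _; rewrite mulr_ge0 ?word_prob_ge0. Qed.

Lemma TC_singleton_le_inv c : applicable x c -> (TC Rs phi [set x] c <= (pi^-1)%:E)%E.
Proof.
move=> xc; apply: ge_ereal_sup => _ [N _ <-]; rewrite lee_fin.
have step_le t : \sum_(w <- words Rs t) wprob c w *
    (if `[< before_tau (path_conf c w) (path_rx w) 0 [set x] t >]
     then (tot (path_conf c w t))^-1 else 0)
  <= (pending_prob c t - pending_prob c t.+1) / pi.
  apply: le_trans (pending_prob_step c t); apply: ler_sum => w _.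
  rewrite ler_wpM2l ?word_prob_ge0 //; case: asboolP => [/(before_tau_pending xc)->|_].
    by rewrite mul1r.
  by rewrite mulr_ge0 ?invr_ge0 ?tot_propensity_ge0.
have telescope n : \sum_(t < n) (pending_prob c t - pending_prob c t.+1) / pi
    = (pending_prob c 0 - pending_prob c n) / pi.
  elim: n => [|n IH]; first by rewrite big_ord0 subrr mul0r.
  by rewrite big_ord_recr /= IH -mulrDl addrA subrK.
rewrite (le_trans (ler_sum _ (fun (t : 'I_N) _ => step_le t))) // telescope.
rewrite -[leRHS]mul1r ler_pM2r ?invr_gt0 //; have := pending_prob0_le1 c.
by have := pending_prob_ge0 c N; lra.
Qed.

End SingleReactionRound.

Definition void_propensity c := \sum_(a <- Rs | a.1 == a.2) prop c a.
Definition nonvoid_propensity c := \sum_(a <- Rs | a.1 != a.2) prop c a.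

Lemma tot_propensity_split c : tot c = void_propensity c + nonvoid_propensity c.
Proof. exact: bigID. Qed.

Section VoidSteps.
Variables (Q : set (reaction S)) (x : reaction S) (c : vec S).
Hypotheses (Q_nonvoid : forall b, Q b -> b.1 != b.2) (Qx : Q x) (x_app : applicable x c).

(* Void steps leave c, hence the applicability of x, unchanged: they cannot end
   the round, which therefore lasts at least as long as a run of void steps. *)
Definition void_word w := all (fun a => (a.1 == a.2) && applicable a c) w.

Lemma path_conf_void_word w k : void_word w -> path_conf c w k = c.
Proof.
elim: w k => [|a w IH] [|k] //= /andP[/andP[/eqP a_void ac] vw].
have -> : path_conf c (a :: w) k.+1 = path_conf (react a c) w k by [].
by rewrite react_void // IH.
Qed.

Lemma before_tau_void_word w t : void_word w -> size w = t ->
  before_tau (path_conf c w) (path_rx w) 0 Q t.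
Proof.
move=> vw sw s /andP[s_gt0 s_le] [/Q_nonvoid|/(_ x Qx) [u [_]]].
  have : path_rx w s.-1 \in w by rewrite mem_nth // sw prednK.
  by move/allP: vw => /[apply] /andP[->].
by rewrite path_conf_void_word // x_app.
Qed.

Lemma sum_void_words t :
  \sum_(w <- words Rs t) wprob c w * (void_word w)%:R = (void_propensity c / tot c) ^+ t.
Proof.
elim: t => [|t IH]; first by rewrite big_seq1 word_prob_nil mul1r.
rewrite big_words_cons exprS; set vt := (_ / _) ^+ t.
rewrite /void_propensity !mulr_suml [RHS]big_mkcond /=.
apply: eq_bigr => a _; case: (boolP (a.1 == a.2)) => [/eqP a_void|a_nonvoid]; last first.
  by rewrite big1 // => w _; rewrite mulr0.
have [ac|a_inapp] := boolP (applicable a c); last first.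
  by rewrite propensity_inapplicable // !mul0r big1 // => w _; rewrite mulr0.
rewrite /vt -IH mulr_sumr; apply: eq_bigr => w _.
by rewrite word_prob_cons react_void //= mulrA.
Qed.

Lemma TC_ge_geometric N :
  ((\sum_(t < N) (void_propensity c / tot c) ^+ t / tot c)%:E <= TC Rs phi Q c)%E.
Proof.
apply: le_trans (ereal_sup_ubound _); last by exists N.
rewrite lee_fin; apply: ler_sum => t _.
rewrite -sum_void_words mulr_suml big_seq [leRHS]big_seq.
apply: ler_sum => w /size_words sw; have [vw|_] := boolP (void_word w); last first.
  rewrite mulr0 mul0r mulr_ge0 ?word_prob_ge0 //.
  by case: asboolP; rewrite ?lexx ?invr_ge0 ?tot_propensity_ge0.
case: asboolP => [_|]; last by move/(_ (before_tau_void_word vw sw)).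
by rewrite mulr1 path_conf_void_word.
Qed.

Lemma TC_ge_nonvoid : 0 < nonvoid_propensity c ->
  (((2 * nonvoid_propensity c)^-1)%:E <= TC Rs phi Q c)%E.
Proof.
move=> P_gt0; have V_ge0 : 0 <= void_propensity c.
  by rewrite sumr_ge0 // => a _; exact: propensity_ge0.
have [N half_le] := geometric_partial_sum_ge_half V_ge0 P_gt0.
by apply: le_trans (TC_ge_geometric N); rewrite lee_fin tot_propensity_split.
Qed.

End VoidSteps.

End StochasticScheduler.

(** * The protocol *)

Definition Sp := 'I_4.
Definition sL : Sp := @Ordinal 4 0 isT.
Definition sA : Sp := @Ordinal 4 1 isT.
Definition sB : Sp := @Ordinal 4 2 isT.
Definition sZ : Sp := @Ordinal 4 3 isT.

Implicit Types (c : vec Sp) (r : vec Sp) (a : reaction Sp).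

Definition cfg (l u b z : nat) : vec Sp := [ffun X : Sp => nth 0%N [:: l; u; b; z] X].

Lemma Sp_ind (P : Sp -> Prop) : P sL -> P sA -> P sB -> P sZ -> forall X, P X.
Proof.
move=> PL PA PB PZ [[|[|[|[|m]]]] lt_m4] //.
- by rewrite (_ : Ordinal lt_m4 = sL) //; apply: val_inj.
- by rewrite (_ : Ordinal lt_m4 = sA) //; apply: val_inj.
- by rewrite (_ : Ordinal lt_m4 = sB) //; apply: val_inj.
- by rewrite (_ : Ordinal lt_m4 = sZ) //; apply: val_inj.
Qed.

Lemma forall_Sp (P : pred Sp) : [forall X, P X] = [&& P sL, P sA, P sB & P sZ].
Proof.
by apply/forallP/and4P => [P_all|[PL PA PB PZ]]; [split; apply: P_all | exact: Sp_ind].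
Qed.

Lemma vec_Sp_eq c c' :
  c sL = c' sL -> c sA = c' sA -> c sB = c' sB -> c sZ = c' sZ -> c = c'.
Proof. by move=> EL EA EB EZ; apply/ffunP; apply: Sp_ind. Qed.

Lemma big_Sp (T : Type) (idx : T) (op : Monoid.law idx) (F : Sp -> T) :
  \big[op/idx]_(X : Sp) F X = op (F sL) (op (F sA) (op (F sB) (F sZ))).
Proof.
rewrite !big_ord_recl big_ord0 Monoid.mulm1.
by congr (op (F _) (op (F _) (op (F _) (F _)))); apply: val_inj.
Qed.

Lemma norm1E c : norm1 c = (c sL + c sA + c sB + c sZ)%N.
Proof. by rewrite /norm1 big_Sp /= !addnA. Qed.

Lemma prod_binE c r : (\prod_(X : Sp) 'C(c X, r X))%N =
  ('C(c sL, r sL) * 'C(c sA, r sA) * 'C(c sB, r sB) * 'C(c sZ, r sZ))%N.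
Proof. by rewrite big_Sp /= !mulnA. Qed.

Definition unit_vec (X : Sp) : vec Sp := [ffun Y => (Y == X) : nat].

Definition rxLA : reaction Sp := (cfg 1 1 0 0, cfg 1 0 1 0).
Definition rxLZ : reaction Sp := (cfg 1 0 0 1, cfg 0 0 2 0).

(* [wf_crn] requires a reaction for every other reactant vector: it is void. *)
Definition product r :=
  if r == rxLA.1 then rxLA.2 else if r == rxLZ.1 then rxLZ.2 else r.

Definition reactants : seq (vec Sp) :=
  [seq r <- [seq [ffun X => val (f X)] | f : {ffun Sp -> 'I_3}] | (1 <= norm1 r <= 2)%N].

Definition Rs : seq (reaction Sp) := [seq (r, product r) | r <- reactants].

Lemma mem_reactants r : (r \in reactants) = (1 <= norm1 r <= 2)%N.
Proof.
rewrite mem_filter andb_idr // => /andP[_ r_le2].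
have r_lt3 X : (r X < 3)%N.
  by rewrite ltnS (leq_trans _ r_le2) // /norm1 (bigD1 X) //= leq_addr.
apply/mapP; exists [ffun X => Ordinal (r_lt3 X)]; first by rewrite mem_enum.
by apply/ffunP => X; rewrite !ffunE.
Qed.

Lemma uniq_reactants : uniq reactants.
Proof.
rewrite filter_uniq // map_inj_uniq ?enum_uniq // => f g /ffunP fg.
by apply/ffunP => X; apply: val_inj; have := fg X; rewrite !ffunE.
Qed.

Lemma mem_Rs a : (a \in Rs) = (a.1 \in reactants) && (a.2 == product a.1).
Proof.
apply/mapP/andP => [[r r_in ->] | [a1_in /eqP a2E]] //.
by exists a.1 => //; rewrite -a2E; case: a {a1_in a2E}.
Qed.

Lemma uniq_Rs : uniq Rs.
Proof. by rewrite map_inj_uniq ?uniq_reactants // => r r' [->]. Qed.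

Lemma Rof_Rs r : r \in reactants -> Rof Rs r = [:: (r, product r)].
Proof.
move=> r_in; rewrite /Rof filter_map.
by rewrite (eq_filter (_ : _ =1 pred1 r)) // filter_pred1_uniq ?uniq_reactants.
Qed.

Lemma rxLZ_neq_rxLA : rxLZ.1 != rxLA.1.
Proof. by apply/eqP => /ffunP/(_ sA); rewrite !ffunE. Qed.

Lemma rxLA_in : rxLA \in Rs.
Proof. by rewrite mem_Rs /product !eqxx mem_reactants norm1E /= !ffunE. Qed.

Lemma rxLZ_in : rxLZ \in Rs.
Proof.
by rewrite mem_Rs /product (negbTE rxLZ_neq_rxLA) !eqxx mem_reactants norm1E /= !ffunE.
Qed.

Lemma rxLA_nonvoid : rxLA.1 != rxLA.2.
Proof. by apply/eqP => /ffunP/(_ sA); rewrite !ffunE. Qed.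

Lemma rxLZ_nonvoid : rxLZ.1 != rxLZ.2.
Proof. by apply/eqP => /ffunP/(_ sL); rewrite !ffunE. Qed.

Lemma Rs_cases a : a \in Rs -> [\/ a = rxLA, a = rxLZ | a.1 = a.2].
Proof.
rewrite mem_Rs => /andP[_ /eqP]; case: a => r p /= ->; rewrite /product.
by case: eqP => [->|_]; [constructor 1 | case: eqP => [->|_]; constructor].
Qed.

Lemma nonvoid_Rs a : a \in Rs -> a.1 != a.2 -> a = rxLA \/ a = rxLZ.
Proof. by case/Rs_cases => [|| ->]; [left | right | rewrite eqxx]. Qed.

Lemma perm_NV_Rs : perm_eq (NV Rs) [:: rxLA; rxLZ].
Proof.
apply: uniq_perm; first by rewrite filter_uniq // uniq_Rs.
  by rewrite /= inE andbT; apply: contraNneq rxLZ_neq_rxLA => ->.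
move=> a; rewrite mem_filter !inE; apply/andP/orP => [[a_nonvoid a_in]|].
  by case: (nonvoid_Rs a_in a_nonvoid) => ->; [left | right].
by case=> /eqP ->; rewrite ?rxLA_nonvoid ?rxLZ_nonvoid ?rxLA_in ?rxLZ_in.
Qed.

Lemma norm1_product a : a \in Rs -> norm1 a.2 = norm1 a.1.
Proof. by case/Rs_cases => [->|->|->] //; rewrite !norm1E !ffunE. Qed.

Lemma applicable_rxLA c : applicable rxLA c = (0 < c sL)%N && (0 < c sA)%N.
Proof. by rewrite /applicable forall_Sp /= !ffunE /= !andbT. Qed.

Lemma applicable_rxLZ c : applicable rxLZ c = (0 < c sL)%N && (0 < c sZ)%N.
Proof. by rewrite /applicable forall_Sp /= !ffunE. Qed.

Lemma react_rxLA c : (0 < c sL)%N -> react rxLA c = cfg (c sL) (c sA - 1) (c sB + 1) (c sZ).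
Proof. by move=> cL; apply: vec_Sp_eq; rewrite !ffunE /= ?subnK ?addn0 ?subn0. Qed.

Lemma react_rxLZ c : react rxLZ c = cfg (c sL - 1) (c sA) (c sB + 2) (c sZ - 1).
Proof. by apply: vec_Sp_eq; rewrite !ffunE /= ?addn0 ?subn0. Qed.

Lemma norm1_unit_vec X : norm1 (unit_vec X) = 1%N.
Proof.
rewrite /norm1 (bigD1 X) //= ffunE eqxx big1 // => Y /negbTE YX.
by rewrite ffunE YX.
Qed.

Lemma applicable_unit_vec_void X c : applicable (unit_vec X, unit_vec X) c = (0 < c X)%N.
Proof.
apply/forallP/idP => [/(_ X)|cX Y]; first by rewrite /= ffunE eqxx.
by rewrite /= ffunE; case: eqP => [->|].
Qed.

Lemma product_unimolecular r : norm1 r = 1%N -> product r = r.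
Proof.
move=> r1; rewrite /product; case: eqP => [rE|_]; first by move: r1; rewrite rE norm1E !ffunE.
by case: eqP => // rE; move: r1; rewrite rE norm1E !ffunE.
Qed.

Lemma unit_vec_void_in X : (unit_vec X, unit_vec X) \in Rs.
Proof.
by rewrite mem_Rs /= mem_reactants product_unimolecular norm1_unit_vec ?eqxx.
Qed.

Lemma norm1_react_Rs a c : a \in Rs -> applicable a c -> norm1 (react a c) = norm1 c.
Proof.
move=> a_in ac; rewrite norm1_react // norm1_product // subnK //.
by move/forallP: ac => ac; rewrite /norm1 leq_sum.
Qed.

Definition potential c := (c sA + c sZ)%N.

Lemma potential_react_nonvoid a c : a \in Rs -> applicable a c -> a.1 != a.2 ->
  (potential (react a c) < potential c)%N.
Proof.
move=> a_in ac a_nonvoid; case: (nonvoid_Rs a_in a_nonvoid) ac => ->.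
  rewrite applicable_rxLA => /andP[cL cA]; rewrite react_rxLA // /potential !ffunE /=.
  by move: (c sA) (c sZ) cA => u z; lia.
rewrite applicable_rxLZ => /andP[cL cZ]; rewrite react_rxLZ /potential !ffunE /=.
by move: (c sA) (c sZ) cZ => u z; lia.
Qed.

Lemma reach_potential c c' : reach Rs c c' ->
  (potential c' <= potential c)%N /\ (potential c' = potential c -> c' = c).
Proof.
elim=> [//|c1 c2 c3 [a [a_in [ac ->]]] _ [le_pot eq_pot]].
have [a_void|a_nonvoid] := eqVneq a.1 a.2.
  by rewrite react_void // in le_pot eq_pot *.
have := potential_react_nonvoid a_in ac a_nonvoid; split=> [|E]; lia.
Qed.

Lemma scc_Rs c : scc Rs c = [set c].
Proof.
apply/seteqP; split=> [c' [/reach_potential[le1 eq1] /reach_potential[le2 _]]|_ ->].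
  by apply: eq1; lia.
by split; apply: reach_refl.
Qed.

Lemma escaping_nonvoid a c : a \in Rs -> applicable a c -> a.1 != a.2 -> escaping Rs c a.
Proof.
move=> a_in ac a_nonvoid; split=> //; rewrite scc_Rs => _ ->; split=> // /= E.
by have := potential_react_nonvoid a_in ac a_nonvoid; rewrite E ltnn.
Qed.

(** * Halting correctness *)

(* Valid initial configurations have one L and one Z; every configuration is a
   target, so halting correctness only asks that executions halt. *)
Definition Iface : interface Sp :=
  @Interface Sp (vec Sp) id (fun c0 _ => c0 sL = 1%N /\ c0 sZ = 1%N).

Lemma react_leaderless a c : a \in Rs -> applicable a c -> c sL = 0%N -> react a c = c.
Proof.
case/Rs_cases => [->|->|a_void] ac cL0.
- by move: ac; rewrite applicable_rxLA cL0.
- by move: ac; rewrite applicable_rxLZ cL0.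
- exact: react_void.
Qed.

Lemma reach_leaderless c c' : c sL = 0%N -> reach Rs c c' -> c' = c.
Proof.
move=> + reach_c; elim: reach_c => // c1 c2 c3 [a [a_in [ac ->]]] _ IH c1L0.
by rewrite IH react_leaderless.
Qed.

Lemma halt_leaderless c0 c : c0 sL = 1%N -> c0 sZ = 1%N -> is_config c -> c sL = 0%N ->
  halt Rs (target Iface c0) c.
Proof. by move=> c0L c0Z c_cfg cL0; split=> [//|c']; apply: reach_leaderless. Qed.

Lemma not_halt_rxLZ Z c : applicable rxLZ c -> ~ halt Rs Z c.
Proof.
move=> c_app [_ halted].
have step_c : reach Rs c (react rxLZ c).
  by apply: reach_step (reach_refl _ _); exists rxLZ; rewrite rxLZ_in.
have := potential_react_nonvoid rxLZ_in c_app rxLZ_nonvoid.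
by rewrite (halted _ step_c) ltnn.
Qed.

Lemma reach_norm1 c c' : reach Rs c c' -> norm1 c' = norm1 c.
Proof. by elim=> // c1 c2 c3 [a [a_in [ac ->]]] _ ->; rewrite norm1_react_Rs. Qed.

Section ValidExecution.
Variables (cs : nat -> vec Sp) (al : nat -> reaction Sp).
Hypotheses (exec : execution Rs cs al) (cs0L : cs 0%N sL = 1%N) (cs0Z : cs 0%N sZ = 1%N).

Lemma execution_leader t : cs t sL = cs t sZ /\ (cs t sL <= 1)%N.
Proof.
elim: t => [|t [LZ L_le1]]; first by rewrite cs0L cs0Z.
have [a_in ac ->] := exec t; case/Rs_cases: a_in ac => [->|->|a_void] ac.
- by move: ac; rewrite applicable_rxLA => /andP[cL _]; rewrite react_rxLA // !ffunE.
- rewrite react_rxLZ !ffunE /=.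
  by move: (cs t sL) (cs t sZ) LZ L_le1 => l z; lia.
- by rewrite react_void.
Qed.

Lemma execution_config t : is_config (cs t).
Proof.
have norm1_cs u : norm1 (cs u) = norm1 (cs 0%N).
  by elim: u => // u IH; have [a_in ac ->] := exec u; rewrite norm1_react_Rs.
by rewrite /is_config norm1_cs norm1E cs0L.
Qed.

Lemma halt_after_rxLZ t : al t = rxLZ -> halt Rs (target Iface (cs 0%N)) (cs t.+1).
Proof.
move=> alE; apply: (halt_leaderless cs0L cs0Z (execution_config t.+1)).
have [_ ac ->] := exec t; move: ac; rewrite alE applicable_rxLZ react_rxLZ ffunE /=.
by have [_] := execution_leader t; move: (cs t sL) => l; lia.
Qed.

Lemma halt_if_rxLZ_inapplicable t :
  ~~ applicable rxLZ (cs t) -> halt Rs (target Iface (cs 0%N)) (cs t).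
Proof.
move=> inapp; apply: (halt_leaderless cs0L cs0Z (execution_config t)).
move: inapp; rewrite applicable_rxLZ.
by have [] := execution_leader t; move: (cs t sL) (cs t sZ) => l z; lia.
Qed.

End ValidExecution.

Lemma Rs_haltingly_correct : haltingly_correct Rs Iface.
Proof.
move=> cs al exec fair [_ [c [_ [cs0L cs0Z]]]].
have cs0_app : applicable rxLZ (cs 0%N) by rewrite applicable_rxLZ cs0L cs0Z.
have [s [_ [fired|inapp]]] := fair 0%N rxLZ rxLZ_in cs0_app.
- by exists s.+1; exact: halt_after_rxLZ.
- by exists s; exact: halt_if_rxLZ_inapplicable.
Qed.

Lemma Rs_wf : wf_crn Rs.
Proof.
split.
- exact: uniq_Rs.
- move=> a a_in; rewrite norm1_product //.
  by move: a_in; rewrite mem_Rs mem_reactants => /andP[/andP[-> ->] _].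
- by move=> r r_ge1 r_le2; rewrite Rof_Rs // mem_reactants r_ge1 r_le2.
- move=> r; rewrite mem_Rs /= => /andP[r_in /eqP rE].
  by rewrite Rof_Rs // -rE.
- by exists 1%N => c0 c _ /reach_norm1 ->; rewrite mul1n.
Qed.

(** * Runtime bounds *)

Section Runtime.
Variable R : realType.
Implicit Types phi : R.

Lemma propensity_Rs phi c a : a \in Rs ->
  propensity Rs phi c a = (\prod_(X : Sp) 'C(c X, a.1 X))%N%:R / phi ^+ (norm1 a.1).-1.
Proof. by rewrite mem_Rs => /andP[a1_in _]; rewrite /propensity Rof_Rs // divr1. Qed.

Lemma propensity_rxLA phi c : propensity Rs phi c rxLA = (c sL * c sA)%:R / phi.
Proof.
by rewrite propensity_Rs ?rxLA_in // prod_binE norm1E /= !ffunE /= !bin0 !bin1 !muln1 expr1.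
Qed.

Lemma propensity_rxLZ phi c : propensity Rs phi c rxLZ = (c sL * c sZ)%:R / phi.
Proof.
by rewrite propensity_Rs ?rxLZ_in // prod_binE norm1E /= !ffunE /= !bin0 !bin1 !muln1 expr1.
Qed.

Lemma propensity_unit_vec_void phi c X :
  propensity Rs phi c (unit_vec X, unit_vec X) = (c X)%:R.
Proof.
rewrite propensity_Rs ?unit_vec_void_in //= norm1_unit_vec expr0 divr1 (bigD1 X) //=.
by rewrite ffunE eqxx bin1 big1 ?muln1 // => Y /negbTE YX; rewrite ffunE YX bin0.
Qed.

Lemma nonvoid_propensity_Rs phi c :
  nonvoid_propensity Rs phi c = (c sL * c sA + c sL * c sZ)%:R / phi.
Proof.
rewrite /nonvoid_propensity -big_filter -/(NV Rs) (perm_big _ perm_NV_Rs).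
by rewrite big_cons big_seq1 propensity_rxLA propensity_rxLZ natrD mulrDl.
Qed.

Lemma tot_propensity_ge1 phi c : 0 < phi -> is_config c -> 1 <= tot_propensity Rs phi c.
Proof.
move=> phi_gt0 c_cfg; have [X cX_gt0] : exists X, (0 < c X)%N.
  apply/existsP; move: c_cfg; apply: contraLR; rewrite negb_exists => /forallP c0.
  rewrite /is_config /norm1 -ltnNge ltnS leqn0 sum_nat_eq0.
  by apply/forallP => X; rewrite -leqn0 leqNgt c0.
rewrite /tot_propensity (bigD1_seq (unit_vec X, unit_vec X)) ?unit_vec_void_in ?uniq_Rs //=.
rewrite propensity_unit_vec_void.
have : 0 <= \sum_(a <- Rs | a != (unit_vec X, unit_vec X)) propensity Rs phi c a.
  by apply: sumr_ge0 => a _; exact: propensity_ge0.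
have : (1 : R) <= (c X)%:R by rewrite ler1n.
lra.
Qed.

Lemma TC_rxLZ_le phi c : 0 < phi -> is_config c ->
  (TC Rs phi [set rxLZ] c <= (phi + 1)%:E)%E.
Proof.
move=> phi_gt0 c_cfg; have [c_app|c_inapp] := boolP (applicable rxLZ c).
  have propensity_ge c' : applicable rxLZ c' -> phi^-1 <= propensity Rs phi c' rxLZ.
    rewrite applicable_rxLZ propensity_rxLZ => /andP[c'L c'Z].
    by rewrite -[leLHS]mul1r ler_pM2r ?invr_gt0 // ler1n muln_gt0 c'L.
  apply: le_trans (TC_singleton_le_inv phi_gt0 rxLZ_in uniq_Rs _ propensity_ge c_app) _.
    by rewrite invr_gt0.
  by rewrite invrK lee_fin lerDl.
apply: le_trans (TC_inapplicable_le _ phi_gt0 (_ : forall b, b = rxLZ -> _)) _.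
  by move=> b ->.
have tot_ge1 := tot_propensity_ge1 phi_gt0 c_cfg.
rewrite lee_fin (le_trans (_ : _ <= 1)) //; first by rewrite invf_le1 // (lt_le_trans ltr01).
lra.
Qed.

Definition rho_LZ : vec Sp -> set (reaction Sp) := fun _ => [set rxLZ].

Lemma rho_LZ_policy : runtime_policy Rs rho_LZ.
Proof. by move=> c a ->; rewrite mem_filter rxLZ_nonvoid rxLZ_in. Qed.

Lemma RT_vals_rho_LZ phi cs al sigma v : 0 < phi -> execution Rs cs al ->
  valid Iface (cs 0%N) -> RT_vals Rs Iface phi rho_LZ sigma cs al v -> (v <= (phi + 1)%:E)%E.
Proof.
move=> phi_gt0 exec [_ [c [_ [cs0L cs0Z]]]].
case=> tr [tstar [istar [tr0 tau_tr [halt_tstar tstar_least] [istar_reached istar_least] ->]]].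
have halted_after t : halt Rs (target Iface (cs 0%N)) (cs t) -> (tstar <= t)%N.
  by move=> halted; rewrite leqNgt; apply/negP => /tstar_least.
have tstar_gt0 : (0 < tstar)%N.
  rewrite lt0n; apply/eqP => tstar0; move: halt_tstar; rewrite tstar0.
  by apply: not_halt_rxLZ; rewrite applicable_rxLZ cs0L cs0Z.
have tstar_le_tr1 : (tstar <= tr 1%N)%N.
  have [tr1_gt [fired|inapp] _] := tau_tr 0%N.
    rewrite -(prednK (leq_ltn_trans (leq0n _) tr1_gt)) halted_after //.
    exact: halt_after_rxLZ.
  have [u [/andP[_ u_le] u_inapp]] := inapp rxLZ erefl.
  by rewrite (leq_trans _ u_le) // halted_after //; apply: halt_if_rxLZ_inapplicable.
have -> : istar = 1%N.
  case: istar istar_reached istar_least => [|[|m]] //; first by rewrite tr0; lia.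
  by move=> _ /(_ 1%N isT).
by rewrite big_ord1 tr0; apply: TC_rxLZ_le => //; exact: execution_config.
Qed.

End Runtime.

Section Adversary.
Variable n : nat.
Hypothesis n_ge2 : (2 <= n)%N.

Definition final_conf := cfg 0 0 n 0.

Definition adv_conf t := if (t <= n - 2)%N then cfg 1 (n - 2 - t) t 1 else final_conf.

Definition final_rxs := [seq a <- Rs | applicable a final_conf].

(* After halting, the adversary schedules the applicable (void) reactions
   round-robin, which makes the execution weakly fair. *)
Definition adv_rx t :=
  if (t < n - 2)%N then rxLA else if t == (n - 2)%N then rxLZ
  else nth rxLZ final_rxs ((t - (n - 1)) %% size final_rxs).

Lemma size_final_rxs_gt0 : (0 < size final_rxs)%N.
Proof.
have : (unit_vec sB, unit_vec sB) \in final_rxs.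
  by rewrite mem_filter unit_vec_void_in applicable_unit_vec_void ffunE /=; lia.
by case: final_rxs.
Qed.

Lemma adv_conf0 : adv_conf 0 = cfg 1 (n - 2) 0 1.
Proof. by rewrite /adv_conf leq0n subn0. Qed.

Lemma adv_conf_tail t : (n - 2 < t)%N -> adv_conf t = final_conf.
Proof. by move=> t_gt; rewrite /adv_conf leqNgt t_gt. Qed.

Lemma adv_rx_tail t : (n - 2 < t)%N ->
  adv_rx t = nth rxLZ final_rxs ((t - (n - 1)) %% size final_rxs).
Proof. by move=> t_gt; rewrite /adv_rx ltnNge ltnW //= gtn_eqF. Qed.

Lemma adv_execution : execution Rs adv_conf adv_rx.
Proof.
move=> t; case: (ltngtP t (n - 2)) => [t_lt|t_gt|t_eq].
- have -> : adv_rx t = rxLA by rewrite /adv_rx t_lt.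
  rewrite /adv_conf (ltnW t_lt) t_lt; split; first exact: rxLA_in.
    by rewrite applicable_rxLA !ffunE /=; lia.
  by rewrite react_rxLA ?ffunE //; apply: vec_Sp_eq; rewrite !ffunE /=; lia.
- have : adv_rx t \in final_rxs by rewrite adv_rx_tail // mem_nth // ltn_mod size_final_rxs_gt0.
  rewrite mem_filter (adv_conf_tail t_gt) (adv_conf_tail (leqW t_gt)) => /andP[a_app a_in].
  by split=> //; rewrite react_leaderless // ffunE.
- have -> : adv_rx t = rxLZ by rewrite /adv_rx t_eq ltnn eqxx.
  rewrite /adv_conf t_eq leqnn ltnn; split; first exact: rxLZ_in.
    by rewrite applicable_rxLZ !ffunE.
  by rewrite react_rxLZ; apply: vec_Sp_eq; rewrite !ffunE /=; lia.
Qed.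

Lemma adv_fair : weakly_fair Rs adv_conf adv_rx.
Proof.
move=> t a a_in _; have [a_app|a_inapp] := boolP (applicable a final_conf); last first.
  by exists (t + (n - 1))%N; rewrite leq_addr adv_conf_tail; [split=> //; right | lia].
have k_gt0 := size_final_rxs_gt0; set k := size final_rxs in k_gt0 *.
have a_final : a \in final_rxs by rewrite mem_filter a_app a_in.
exists (n - 1 + (t * k + index a final_rxs))%N; split; first by nia.
left; rewrite adv_rx_tail; last by lia.
by rewrite addKn modnMDl modn_small ?index_mem // nth_index.
Qed.

Lemma adv_config t : is_config (adv_conf t).
Proof. by rewrite /is_config /adv_conf norm1E; case: ifP; rewrite !ffunE /=; lia. Qed.

Lemma adv_halting_step :
  is_least (fun t => halt Rs (target Iface (adv_conf 0)) (adv_conf t)) (n - 1).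
Proof.
split=> [|m m_lt].
  have n1_gt : (n - 2 < n - 1)%N by lia.
  have := adv_config (n - 1); rewrite adv_conf_tail // => final_cfg.
  by apply: halt_leaderless; rewrite // /adv_conf /final_conf !ffunE.
apply: not_halt_rxLZ; rewrite /adv_conf ifT; last by lia.
by rewrite applicable_rxLZ !ffunE.
Qed.

Section AdmissiblePolicy.
Variable rho : vec Sp -> set (reaction Sp).
Hypotheses (rho_policy : runtime_policy Rs rho)
  (rho_escaping : forall c, is_config c -> escaping Rs c `<=` rho c).

Lemma adv_tau i : is_tau adv_conf adv_rx i (rho (adv_conf i)) i.+1.
Proof.
split=> [//| |s /andP[i_lt s_lt]]; last by lia.
have [i_le|i_gt] := leqP i (n - 2).
  left; apply: rho_escaping (adv_config i) _ _; have [a_in a_app _] := adv_execution i.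
  apply: escaping_nonvoid => //; rewrite /adv_rx.
  case: ifP => [_|/negbT i_nlt]; first exact: rxLA_nonvoid.
  by rewrite ifT ?rxLZ_nonvoid //; lia.
right => b /rho_policy; rewrite mem_filter => /andP[b_nonvoid b_in].
exists i; rewrite leqnn leqnSn adv_conf_tail //; split=> //.
by case: (nonvoid_Rs b_in b_nonvoid) => ->; rewrite ?applicable_rxLA ?applicable_rxLZ !ffunE.
Qed.

End AdmissiblePolicy.
End Adversary.

Section LowerBound.
Variables (R : realType) (phi : R) (n : nat) (rho : vec Sp -> set (reaction Sp)).
Hypotheses (phi_gt0 : 0 < phi) (n_ge2 : (2 <= n)%N) (rho_policy : runtime_policy Rs rho)
  (rho_escaping : forall c, is_config c -> escaping Rs c `<=` rho c).

Lemma TC_adv_ge i : (i < n - 1)%N ->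
  ((phi / (2 * (n - 1 - i)%:R))%:E <= TC Rs phi (rho (adv_conf n i)) (adv_conf n i))%E.
Proof.
move=> i_lt; have k_gt0 : (0 : R) < (n - 1 - i)%:R by rewrite ltr0n; lia.
have conf_i : adv_conf n i = cfg 1 (n - 2 - i) i 1 by rewrite /adv_conf ifT //; lia.
have rxLZ_app : applicable rxLZ (adv_conf n i) by rewrite conf_i applicable_rxLZ !ffunE.
have rho_nonvoid b : rho (adv_conf n i) b -> b.1 != b.2.
  by move/rho_policy; rewrite mem_filter => /andP[].
have rho_rxLZ : rho (adv_conf n i) rxLZ.
  apply: rho_escaping (adv_config n_ge2 i) _ _.
  exact: escaping_nonvoid rxLZ_in rxLZ_app rxLZ_nonvoid.
have nonvoid_i : nonvoid_propensity Rs phi (adv_conf n i) = (n - 1 - i)%:R / phi.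
  by rewrite nonvoid_propensity_Rs conf_i !ffunE /=; congr (_%:R / _); lia.
have := TC_ge_nonvoid (Rs := Rs) phi_gt0 rho_nonvoid rho_rxLZ rxLZ_app; rewrite nonvoid_i.
have -> : (2 * ((n - 1 - i)%:R / phi))^-1 = phi / (2 * (n - 1 - i)%:R).
  by field; rewrite !gt_eqF.
by apply; rewrite divr_gt0.
Qed.

Lemma adv_RT_vals : RT_vals Rs Iface phi rho id (adv_conf n) (adv_rx n)
  (\sum_(i < n - 1) TC Rs phi (rho (adv_conf n i)) (adv_conf n i))%E.
Proof.
exists id, (n - 1)%N, (n - 1)%N; split=> //.
- exact: adv_tau.
- exact: adv_halting_step.
- by split=> // m; lia.
Qed.

Lemma RT_max_ge : ((phi / 2 * ln n%:R)%:E <= RT_max Rs Iface phi rho n)%E.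
Proof.
apply: le_trans (ereal_sup_ubound _); last first.
  exists (adv_conf n), (adv_rx n), id; split=> //.
  - by split; [exact: adv_execution | exact: adv_fair].
  - split; first exact: adv_config.
    by exists (adv_conf n 0); split; [exact: adv_config | rewrite /= adv_conf0 !ffunE].
  - by rewrite adv_conf0 norm1E !ffunE /=; lia.
  - exact: adv_RT_vals.
apply: le_trans; last by apply: lee_sum => i _; exact: TC_adv_ge (ltn_ord i).
rewrite sumEFin lee_fin (eq_bigr (fun i : 'I_(n - 1) => phi / 2 * ((n - 1 - i)%:R)^-1)).
  rewrite -mulr_sumr ler_pM2l ?divr_gt0 // (reindex_inj rev_ord_inj) /=.
  rewrite (eq_bigr (fun i : 'I_(n - 1) => (i.+1%:R)^-1)) => [|i _]; last by rewrite subKn.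
  by rewrite -[n in leLHS](@subnK 1 n) ?addn1 ?ln_le_harmonic //; lia.
by move=> i _; rewrite invfM mulrA.
Qed.

End LowerBound.

Section Asymptotics.
Variables (R : realType) (phi : nat -> R).
Hypothesis phi_Theta_n : volume_Theta_n phi.

Lemma volume_gt0 n : (0 < n)%N -> 0 < phi n.
Proof.
move=> n_gt0; have [a [b [a_gt0 _ phi_bounds]]] := phi_Theta_n.
have [phi_lb _] := phi_bounds n n_gt0.
by apply: lt_le_trans phi_lb; rewrite mulr_gt0 // ltr0n.
Qed.

Lemma RT_halt_O_n : is_O_n (RT_halt Rs Iface phi).
Proof.
have [a [b [_ b_gt0 phi_bounds]]] := phi_Theta_n.
exists (b + 1), 1%N => n n_gt0; have [_ phi_ub] := phi_bounds n n_gt0.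
apply: le_trans.
  by apply: ereal_inf_lbound; exists rho_LZ => //; split=> //; exact: rho_LZ_policy.
apply: ge_ereal_sup => v [cs [al [sigma [[exec _] valid_cs0 _ _ RT_v]]]].
apply: le_trans (RT_vals_rho_LZ (volume_gt0 n_gt0) exec valid_cs0 RT_v) _.
have : 1 <= n%:R :> R by rewrite ler1n.
by rewrite lee_fin; lra.
Qed.

Lemma RT_halt_escaping_Omega_nlogn : is_Omega_nlogn (RT_halt_escaping Rs Iface phi).
Proof.
have [a [b [a_gt0 _ phi_bounds]]] := phi_Theta_n.
exists (a / 2), 2%N; split=> [|n n_ge2]; first by rewrite divr_gt0.
have n_gt0 : (0 < n)%N by lia.
have [phi_lb _] := phi_bounds n n_gt0.
apply: le_ereal_inf_tmp => _ [rho [rho_policy rho_escaping] <-].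
apply: le_trans (RT_max_ge (volume_gt0 n_gt0) n_ge2 rho_policy rho_escaping).
have : 0 <= ln (n%:R : R) by rewrite ln_ge0 // ler1n.
by rewrite lee_fin; nra.
Qed.

End Asymptotics.

Theorem proposition7p4 (R : realType) :
  exists (S : finType) (Rs : seq (reaction S)) (I : interface S),
    [/\ wf_crn Rs, haltingly_correct Rs I &
      forall phi : nat -> R, volume_Theta_n phi ->
        is_O_n (RT_halt Rs I phi) /\ is_Omega_nlogn (RT_halt_escaping Rs I phi)].
Proof.
exists Sp, Rs, Iface; split; [exact: Rs_wf | exact: Rs_haltingly_correct |].
by move=> phi phi_Theta_n; split; [exact: RT_halt_O_n | exact: RT_halt_escaping_Omega_nlogn].
Qed.
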